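(* Let $F\colon \mathbb{R}^{nm \times nm} \to \mathbb{R}$ be differentiable at $X = A \otimes B$, where $A \in \mathbb{R}^{n \times n}$ and $B \in \mathbb{R}^{m \times m}$ are nonzero matrices. Define $G\colon \mathbb{R}^{n \times n} \to \mathbb{R}$ by $G(A_1) = F(A_1 \otimes B)$. Then $G$ is differentiable at $A$ and \[ \nabla G(A) = \sum_{j=1}^{m} \left(I_n \otimes e_j^{T} B_L^{*}\right) \nabla F(X) \left(I_n \otimes B_R^{*} e_j\right) \] for any $B_L, B_R \in \mathbb{C}^{m \times m}$ with $B = B_L B_R$. Similarly, define $H\colon \mathbb{R}^{m \times m} \to \mathbb{R}$ by $H(B_1) = F(A \otimes B_1)$. Then $H$ is differentiable at $B$ and \[ \nabla H(B) = \sum_{i=1}^{n} \left(e_i^{T} A_L^{*} \otimes I_m\right) \nabla F(X) \left(A_R^{*} e_i \otimes I_m\right) \] for any $A_L, A_R \in \mathbb{C}^{n \times n}$ with $A = A_L A_R$.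
   Context: $\otimes$ denotes the Kronecker product, $e_j$ the $j$th standard unit vector of appropriate size, $I_n$ the $n\times n$ identity, and $(\cdot)^*$ the conjugate transpose. Gradients of real-valued functions of real matrices are taken with respect to the Frobenius inner product $\langle X, Y\rangle_F = \operatorname{trace}(X^T Y)$. *)

From mathcomp Require Import all_boot all_order all_algebra.
From mathcomp Require Import all_classical all_reals all_analysis.
From mathcomp.real_closed Require Export complex mxtens.

Set Implicit Arguments.
Unset Strict Implicit.
Unset Printing Implicit Defensive.

Import Order.TTheory GRing.Theory Num.Theory.
Local Open Scope ring_scope.

(* Gradient of f : 'M[R]_(p,q) -> R at x w.r.t. the Frobenius inner product
   <X,Y> = tr(X^T Y) = \sum_{i,j} X i j * Y i j : the matrix whose (i,j) entry
   is the derivative 'd f x applied to the unit matrix E_ij, so that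
   'd f x H = <gradient f x, H>_F whenever f is differentiable at x. *)
Definition gradient (R : realType) (p q : nat) (f : 'M[R]_(p, q) -> R)
  (x : 'M[R]_(p, q)) : 'M[R]_(p, q) :=
  \matrix_(i, j) ('d f (x : ('M[R]_(p, q) : normedModType R))
                    (delta_mx i j : 'M[R]_(p, q))).
Arguments gradient {R p q} f x.

Definition mxC (R : realType) (p q : nat) (M : 'M[R]_(p, q)) : 'M[R[i]]_(p, q) :=
  map_mx (fun x : R => x%:C)%C M.
Arguments mxC {R p q} M.

Definition ctrmx (R : realType) (p q : nat) (M : 'M[R[i]]_(p, q)) : 'M[R[i]]_(q, p) :=
  (map_mx (@conjc R) M)^T.
Arguments ctrmx {R p q} M.

(* G is F composed with the linear map A1 |-> A1 *t B, so by the chain rule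
   (grad G(A))_ij = dF(X)(E_ij *t B) = \sum_(k,l) B_kl (grad F(X))_((i,k),(j,l)).
   The (i,j) entry of the t-th summand on the right-hand side is
   \sum_(k,l) conj(BL_kt) (grad F(X))_((i,k),(j,l)) conj(BR_tl), and summing over
   t turns the coefficient into conj((BL BR)_kl) = B_kl because B is real. *)

From HB Require Import structures.
From mathcomp Require Import all_boot all_order all_algebra.
From mathcomp Require Import all_classical all_reals all_analysis.
From mathcomp.real_closed Require Import complex mxtens.

Import Order.TTheory GRing.Theory Num.Theory.
Local Open Scope ring_scope.

Section KroneckerAlgebra.
Context {K : comPzRingType}.

Definition tensmxr {m n p q} (B : 'M[K]_(p, q)) (A : 'M[K]_(m, n)) := A *t B.

Lemma tensmx_is_linear {m n p q} (A : 'M[K]_(m, n)) :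
  linear (@tensmx K m n p q A).
Proof. by move=> a x y; apply/matrixP => i j; rewrite !mxE mulrDr mulrCA. Qed.

Lemma tensmxr_is_linear {m n p q} (B : 'M[K]_(p, q)) :
  linear (@tensmxr m n p q B).
Proof. by move=> a x y; apply/matrixP => i j; rewrite !mxE mulrDl mulrA. Qed.

HB.instance Definition _ m n p q A :=
  GRing.isLinear.Build K _ _ _ (@tensmx K m n p q A) (tensmx_is_linear A).
HB.instance Definition _ m n p q B :=
  GRing.isLinear.Build K _ _ _ (@tensmxr m n p q B) (tensmxr_is_linear B).

Lemma mxtens_index_eq m n (ik jl : 'I_m * 'I_n) :
  (mxtens_index ik == mxtens_index jl) = (ik == jl).
Proof. exact/inj_eq/can_inj/mxtens_indexK. Qed.

Lemma tensmx_delta_delta {m n p q} (i : 'I_m) (j : 'I_n) (k : 'I_p) (l : 'I_q) :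
  delta_mx i j *t delta_mx k l =
  delta_mx (mxtens_index (i, k)) (mxtens_index (j, l)) :> 'M[K]_(_, _).
Proof.
apply/matrixP => ik jl.
case: (mxtens_indexP ik) => i' k'; case: (mxtens_indexP jl) => j' l'.
rewrite tensmxE !mxE !mxtens_index_eq !xpair_eqE.
by do 4 case: eqP => _; rewrite ?mulr1 ?mulr0.
Qed.

Lemma tensmx_deltal {m n p q} (i : 'I_m) (j : 'I_n) (B : 'M[K]_(p, q)) :
  delta_mx i j *t B =
  \sum_k \sum_l B k l *: delta_mx (mxtens_index (i, k)) (mxtens_index (j, l)).
Proof.
rewrite [in LHS](matrix_sum_delta B) linear_sum; apply: eq_bigr => k _.
by rewrite linear_sum; apply: eq_bigr => l _; rewrite linearZ -tensmx_delta_delta.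
Qed.

Lemma tensmx_deltar {m n p q} (A : 'M[K]_(m, n)) (k : 'I_p) (l : 'I_q) :
  A *t delta_mx k l =
  \sum_i \sum_j A i j *: delta_mx (mxtens_index (i, k)) (mxtens_index (j, l)).
Proof.
rewrite -[LHS]/(tensmxr _ A) [in LHS](matrix_sum_delta A) linear_sum.
apply: eq_bigr => i _; rewrite linear_sum; apply: eq_bigr => j _.
by rewrite linearZ -tensmx_delta_delta.
Qed.

Lemma sum_mxtens_index (V : nmodType) m n (f : 'I_(m * n) -> V) :
  \sum_ik f ik = \sum_i \sum_k f (mxtens_index (i, k)).
Proof.
rewrite pair_big (reindex (@mxtens_index m n)) /=; first by apply: eq_bigr => -[].
by exists (@mxtens_unindex m n) => ik _; rewrite (mxtens_indexK, mxtens_unindexK).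
Qed.

Lemma sum_mx1l {n} (i : 'I_n) (f : 'I_n -> K) :
  \sum_a (1%:M : 'M[K]_n) i a * f a = f i.
Proof.
rewrite (bigD1 i) //= big1 ?mxE ?eqxx ?mul1r ?addr0 // => a.
by rewrite mxE eq_sym => /negbTE ->; rewrite mul0r.
Qed.

Lemma sum_mx1r {n} (j : 'I_n) (f : 'I_n -> K) :
  \sum_b f b * (1%:M : 'M[K]_n) b j = f j.
Proof. by rewrite -[RHS]sum_mx1l; apply: eq_bigr => b _; rewrite mulrC !mxE eq_sym. Qed.

Lemma tens1mx_mulmxE n m p (r : 'rV[K]_m) (M : 'M[K]_(n * m, p)) i j :
  ((1%:M : 'M[K]_n) *t r *m M) (mxtens_index (i, ord0)) j =
  \sum_k r 0 k * M (mxtens_index (i, k)) j.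
Proof.
rewrite mxE sum_mxtens_index.
rewrite -(sum_mx1l i (fun a => \sum_k r 0 k * M (mxtens_index (a, k)) j)).
apply: eq_bigr => a _; rewrite mulr_sumr; apply: eq_bigr => k _.
by rewrite tensmxE mulrA.
Qed.

Lemma mulmx_tens1mxE n m p (M : 'M[K]_(p, n * m)) (c : 'cV[K]_m) i j :
  (M *m ((1%:M : 'M[K]_n) *t c)) i (mxtens_index (j, ord0)) =
  \sum_l M i (mxtens_index (j, l)) * c l 0.
Proof.
rewrite mxE sum_mxtens_index.
rewrite -(sum_mx1r j (fun b => \sum_l M i (mxtens_index (b, l)) * c l 0)).
apply: eq_bigr => b _; rewrite mulr_suml; apply: eq_bigr => l _.
by rewrite tensmxE mulrAC mulrA.
Qed.

Lemma tensmx1_mulmxE n m p (r : 'rV[K]_n) (M : 'M[K]_(n * m, p)) i j :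
  (r *t (1%:M : 'M[K]_m) *m M) (mxtens_index (ord0, i)) j =
  \sum_k r 0 k * M (mxtens_index (k, i)) j.
Proof.
rewrite mxE sum_mxtens_index; apply: eq_bigr => k _.
rewrite -(sum_mx1l i (fun b => M (mxtens_index (k, b)) j)) mulr_sumr.
by apply: eq_bigr => b _; rewrite tensmxE mulrA.
Qed.

Lemma mulmx_tensmx1E n m p (M : 'M[K]_(p, n * m)) (c : 'cV[K]_n) i j :
  (M *m (c *t (1%:M : 'M[K]_m))) i (mxtens_index (ord0, j)) =
  \sum_l M i (mxtens_index (l, j)) * c l 0.
Proof.
rewrite mxE sum_mxtens_index; apply: eq_bigr => l _.
rewrite -(sum_mx1r j (fun b => M i (mxtens_index (l, b)))) mulr_suml.
by apply: eq_bigr => b _; rewrite tensmxE mulrAC mulrA.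
Qed.

Lemma cast_ord_muln1 n (i : 'I_n) :
  cast_ord (esym (muln1 n)) i = mxtens_index (i, ord0).
Proof. by apply: val_inj; rewrite /= muln1 addn0. Qed.

Lemma cast_ord_mul1n m (i : 'I_m) :
  cast_ord (esym (mul1n m)) i = mxtens_index (ord0, i).
Proof. exact: val_inj. Qed.

Lemma sum_tens1mx_sandwich {I : finType} {n m} {r : I -> 'rV[K]_m}
    {c : I -> 'cV[K]_m} {b : 'I_m -> 'I_m -> K} (G : 'M[K]_(n * m)) :
  (forall k l, \sum_t r t 0 k * c t l 0 = b k l) ->
  \sum_t castmx (muln1 n, muln1 n)
           ((1%:M : 'M[K]_n) *t r t *m G *m ((1%:M : 'M[K]_n) *t c t)) =
  \matrix_(i, j) \sum_k \sum_l
     b k l * G (mxtens_index (i, k)) (mxtens_index (j, l)).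
Proof.
move=> rcb; apply/matrixP => i j; rewrite summxE mxE.
under eq_bigr => t _ do rewrite castmxE !cast_ord_muln1 -mulmxA tens1mx_mulmxE.
rewrite exchange_big; apply: eq_bigr => k _.
under eq_bigr => t _ do rewrite mulmx_tens1mxE mulr_sumr.
rewrite exchange_big; apply: eq_bigr => l _.
by rewrite -rcb mulr_suml; apply: eq_bigr => t _; rewrite mulrAC mulrA.
Qed.

Lemma sum_tensmx1_sandwich {I : finType} {n m} {r : I -> 'rV[K]_n}
    {c : I -> 'cV[K]_n} {a : 'I_n -> 'I_n -> K} (G : 'M[K]_(n * m)) :
  (forall k l, \sum_t r t 0 k * c t l 0 = a k l) ->
  \sum_t castmx (mul1n m, mul1n m)
           (r t *t (1%:M : 'M[K]_m) *m G *m (c t *t (1%:M : 'M[K]_m))) =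
  \matrix_(i, j) \sum_k \sum_l
     a k l * G (mxtens_index (k, i)) (mxtens_index (l, j)).
Proof.
move=> rca; apply/matrixP => i j; rewrite summxE mxE.
under eq_bigr => t _ do rewrite castmxE !cast_ord_mul1n -mulmxA tensmx1_mulmxE.
rewrite exchange_big; apply: eq_bigr => k _.
under eq_bigr => t _ do rewrite mulmx_tensmx1E mulr_sumr.
rewrite exchange_big; apply: eq_bigr => l _.
by rewrite -rca mulr_suml; apply: eq_bigr => t _; rewrite mulrAC mulrA.
Qed.

End KroneckerAlgebra.

Arguments tensmxr {K m n p q} B A /.

Section MatrixCalculus.
Context {R : realType}.
Local Notation V p q := ('M[R]_(p, q) : normedModType R).

Lemma mx_entry_le_norm p q (x : 'M[R]_(p, q)) i j : `|x i j| <= `|x|.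
Proof.
rewrite [leRHS]/Num.Def.normr /= mx_normrE.
by apply/bigmax_geP; right => /=; exists (i, j).
Qed.

Lemma linear_mx_continuous {p q} {W : normedModType R} (f : {linear V p q -> W}) :
  continuous f.
Proof.
apply/bounded_linear_continuous/linear_boundedP.
pose C := \sum_i \sum_j `|f (delta_mx i j)|.
near=> r => x.
have Cr : C <= r by near: r; apply: nbhs_pinfty_ge; rewrite num_real.
rewrite [x in f x]matrix_sum_delta linear_sum.
apply: le_trans (ler_norm_sum _ _ _) _.
apply: (le_trans _ (ler_wpM2r (normr_ge0 x) Cr)).
rewrite mulr_suml; apply: ler_sum => i _.
rewrite mulr_suml linear_sum; apply: le_trans (ler_norm_sum _ _ _) _.
apply: ler_sum => j _.
by rewrite linearZ normrZ mulrC ler_wpM2l ?mx_entry_le_norm.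
Unshelve. all: by end_near. Qed.

Lemma gradientE p q (f : V p q -> R) (x : V p q) i j :
  gradient f x i j = 'd f x (delta_mx i j).
Proof. by rewrite mxE. Qed.

Lemma gradient_comp_linear {p q r s} (L : {linear V p q -> V r s})
    (F : V r s -> R) (x : V p q) :
  differentiable F (L x) ->
  differentiable (F \o L) x /\
  gradient (F \o L) x = \matrix_(i, j) 'd F (L x) (L (delta_mx i j)).
Proof.
move=> dF; have Lc := linear_mx_continuous L.
have dL := linear_differentiable x Lc.
split; first exact: differentiable_comp.
by apply/matrixP => i j; rewrite !mxE diff_comp // diff_lin.
Qed.

End MatrixCalculus.

Section KroneckerGradient.
Context {R : realType} {n m : nat} {F : 'M[R]_(n * m) -> R}.
Context {A : 'M[R]_n} {B : 'M[R]_m}.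
Hypothesis dF : differentiable F (A *t B : ('M[R]_(n * m) : normedModType R)).

Lemma gradient_tensmxr :
  differentiable (fun A1 : 'M[R]_n => F (A1 *t B)) (A : ('M[R]_n : normedModType R)) /\
  gradient (fun A1 : 'M[R]_n => F (A1 *t B)) A =
  \matrix_(i, j) \sum_k \sum_l
     B k l * gradient F (A *t B) (mxtens_index (i, k)) (mxtens_index (j, l)).
Proof.
have [dG ->] := gradient_comp_linear (tensmxr B) F A dF.
split=> //; apply/matrixP => i j; rewrite !mxE /= tensmx_deltal linear_sum.
apply: eq_bigr => k _; rewrite linear_sum; apply: eq_bigr => l _.
by rewrite linearZ gradientE.
Qed.

Lemma gradient_tensmx :
  differentiable (fun B1 : 'M[R]_m => F (A *t B1)) (B : ('M[R]_m : normedModType R)) /\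
  gradient (fun B1 : 'M[R]_m => F (A *t B1)) B =
  \matrix_(i, j) \sum_k \sum_l
     A k l * gradient F (A *t B) (mxtens_index (k, i)) (mxtens_index (l, j)).
Proof.
have [dH ->] := gradient_comp_linear (tensmx A) F B dF.
split=> //; apply/matrixP => i j; rewrite !mxE /= tensmx_deltar linear_sum.
apply: eq_bigr => k _; rewrite linear_sum; apply: eq_bigr => l _.
by rewrite linearZ gradientE.
Qed.

End KroneckerGradient.

Lemma sum_ctrmx_factors {R : realType} {m} {B : 'M[R]_m} {BL BR : 'M[R[i]]_m} :
  mxC B = BL *m BR -> forall k l,
  \sum_t (delta_mx 0 t *m ctrmx BL : 'rV_m) 0 k *
         (ctrmx BR *m delta_mx t 0 : 'cV_m) l 0 =
  (B k l)%:C%C.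
Proof.
move=> BLR k l; under eq_bigr => t _ do rewrite -rowE -colE !mxE -rmorphM.
rewrite -rmorph_sum; move/matrixP/(_ k l): BLR; rewrite !mxE => <-.
by rewrite /conjc /= oppr0.
Qed.

Theorem lemma3p2 (R : realType) (n m : nat) (F : 'M[R]_(n * m) -> R)
  (A : 'M[R]_n) (B : 'M[R]_m) :
  A != 0 -> B != 0 -> differentiable F (A *t B : ('M[R]_(n * m) : normedModType R)) ->
  (differentiable (fun A1 : 'M[R]_n => F (A1 *t B)) (A : ('M[R]_n : normedModType R)) /\
   forall BL BR : 'M[R[i]]_m, mxC B = BL *m BR ->
     mxC (gradient (fun A1 : 'M[R]_n => F (A1 *t B)) A) =
     \sum_(j < m)
        castmx (muln1 n, muln1 n)
          ((1%:M : 'M[R[i]]_n) *t (delta_mx 0 j *m ctrmx BL : 'M[R[i]]_(1, m))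
           *m mxC (gradient F (A *t B))
           *m ((1%:M : 'M[R[i]]_n) *t (ctrmx BR *m delta_mx j 0 : 'M[R[i]]_(m, 1)))))
  /\
  (differentiable (fun B1 : 'M[R]_m => F (A *t B1)) (B : ('M[R]_m : normedModType R)) /\
   forall AL AR : 'M[R[i]]_n, mxC A = AL *m AR ->
     mxC (gradient (fun B1 : 'M[R]_m => F (A *t B1)) B) =
     \sum_(i < n)
        castmx (mul1n m, mul1n m)
          ((delta_mx 0 i *m ctrmx AL : 'M[R[i]]_(1, n)) *t (1%:M : 'M[R[i]]_m)
           *m mxC (gradient F (A *t B))
           *m ((ctrmx AR *m delta_mx i 0 : 'M[R[i]]_(n, 1)) *t (1%:M : 'M[R[i]]_m)))).
Proof.
move=> _ _ dF.
have [dG gradG] := gradient_tensmxr dF.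
have [dH gradH] := gradient_tensmx dF.
split; split=> //.
- move=> BL BR BLR.
  rewrite (sum_tens1mx_sandwich _ (sum_ctrmx_factors BLR)) gradG.
  apply/matrixP => i j; rewrite !mxE rmorph_sum; apply: eq_bigr => k _.
  by rewrite rmorph_sum; apply: eq_bigr => l _; rewrite rmorphM !mxE.
- move=> AL AR ALR.
  rewrite (sum_tensmx1_sandwich _ (sum_ctrmx_factors ALR)) gradH.
  apply/matrixP => i j; rewrite !mxE rmorph_sum; apply: eq_bigr => k _.
  by rewrite rmorph_sum; apply: eq_bigr => l _; rewrite rmorphM !mxE.
Qed.
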